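(* Let $m\in(0,1)$, $h_0,h_1\in\mathbb{R}$, and let $(P_t)_{t\ge0}$ be the residual polynomials of $\mathrm{HB}_2(h_0,h_1;m)$, i.e. the polynomials with $x_t-x_*=P_t(H)(x_0-x_* )$ for every quadratic $f(x)=\tfrac12(x-x_* )^\top H(x-x_* )+f_*$ and every $x_0$. Let $\zeta(\lambda)=\left(\frac{1+m-\lambda h_0}{2\sqrt m}\right)\left(\frac{1+m-\lambda h_1}{2\sqrt m}\right)$. Then for every $n\ge0$ and every $\lambda$ with $\zeta(\lambda)\ge0$ (in particular whenever $2\zeta(\lambda)-1\ge-1$), $$P_{2n}(\lambda)=m^n\left[\frac{2m}{1+m}T_{2n}\big(\sqrt{\zeta(\lambda)}\big)+\frac{1-m}{1+m}U_{2n}\big(\sqrt{\zeta(\lambda)}\big)\right].$$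
   Context: $\mathrm{HB}_2(h_0,h_1;m)$ started at $x_0$ produces $x_1=x_0-\frac{h_0}{1+m}\nabla f(x_0)$ and $x_{t+1}=x_t-h_{t\bmod 2}\nabla f(x_t)+m(x_t-x_{t-1})$ for $t\ge1$. $T_n$ and $U_n$ are the Chebyshev polynomials of the first and second kind ($T_0=U_0=1$, $T_1(x)=x$, $U_1(x)=2x$, both satisfying $Q_{n+1}=2xQ_n-Q_{n-1}$). *)

From Stdlib Require Import Reals.
Open Scope R_scope.

(* The HB_2(h0,h1;m) method on R with gradient g, started at x0.
   hb2_pair h0 h1 m g x0 t = (x_t, x_{t+1}), where
   x_1 = x_0 - h0/(1+m) g(x_0) and
   x_{t+1} = x_t - h_{t mod 2} g(x_t) + m (x_t - x_{t-1}) for t >= 1. *)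
Fixpoint hb2_pair (h0 h1 m : R) (g : R -> R) (x0 : R) (t : nat) : R * R :=
  match t with
  | O => (x0, x0 - h0 / (1 + m) * g x0)
  | S t' =>
      let (a, b) := hb2_pair h0 h1 m g x0 t' in
      (b, b - (if Nat.even (S t') then h0 else h1) * g b + m * (b - a))
  end.

Definition hb2 (h0 h1 m : R) (g : R -> R) (x0 : R) (t : nat) : R :=
  fst (hb2_pair h0 h1 m g x0 t).

(* Residual polynomial P_t of HB_2(h0,h1;m) evaluated at lambda:
   x_t - x_* = P_t(H)(x_0 - x_* ) for the quadratic with Hessian H; taking
   the one-dimensional quadratic f(x) = lambda/2 x^2 (H = lambda, x_* = 0,
   gradient x |-> lambda x) and x_0 = 1 gives P_t(lambda) = x_t. *)
Definition resP (h0 h1 m : R) (t : nat) (lambda : R) : R :=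
  hb2 h0 h1 m (fun x => lambda * x) 1 t.

Fixpoint cheb_pair (a0 a1 x : R) (n : nat) : R * R :=
  match n with
  | O => (a0, a1)
  | S n' => let (p, q) := cheb_pair a0 a1 x n' in (q, 2 * x * q - p)
  end.

Definition chebT (n : nat) (x : R) : R := fst (cheb_pair 1 x x n).
Definition chebU (n : nat) (x : R) : R := fst (cheb_pair 1 (2 * x) x n).

Definition zeta (h0 h1 m lambda : R) : R :=
  ((1 + m - lambda * h0) / (2 * sqrt m)) * ((1 + m - lambda * h1) / (2 * sqrt m)).

From Stdlib Require Import Reals Lra Lia.
Open Scope R_scope.

(* The residual polynomials of HB_2 obey the two-step recursion
     P_{t+2} = (1 + m - h_{(t+1) mod 2} lambda) P_{t+1} - m P_t,
   so composing two consecutive steps, the even-indexed values E_k = P_{2k}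
   satisfy the constant-coefficient recursion
     E_{k+2} = (A B - 2m) E_{k+1} - m^2 E_k,
   with A = 1 + m - h0 lambda and B = 1 + m - h1 lambda.  Likewise the
   Chebyshev polynomials at even indices satisfy Q_{2k+4} = (4z^2 - 2) Q_{2k+2}
   - Q_{2k}, hence m^k Q_{2k} satisfies a recursion with coefficients
   m (4z^2 - 2) and m^2.  When z^2 = zeta = A B / (4m) the two recursions
   coincide, and a solution of a second-order linear recursion is determined
   by its first two terms; checking the terms k = 0 and k = 1 proves the
   theorem. *)

Lemma linrec_ext (a b : R) (u v : nat -> R) :
  (forall k, u (S (S k)) = a * u (S k) - b * u k) ->
  (forall k, v (S (S k)) = a * v (S k) - b * v k) ->
  u 0%nat = v 0%nat -> u 1%nat = v 1%nat ->
  forall k, u k = v k.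
Proof.
  intros Hu Hv H0 H1 k.
  assert (Hpair : forall j, u j = v j /\ u (S j) = v (S j)).
  { induction j as [|j [IHj IHSj]]; [split; assumption|].
    split; [exact IHSj|].
    rewrite Hu, Hv, IHj, IHSj. reflexivity. }
  exact (proj1 (Hpair k)).
Qed.

Lemma linrec_scale (m c : R) (w : nat -> R) :
  (forall k, w (S (S k)) = c * w (S k) - w k) ->
  forall k, m ^ S (S k) * w (S (S k)) = m * c * (m ^ S k * w (S k)) - m ^ 2 * (m ^ k * w k).
Proof. intros Hw k. rewrite Hw. simpl. ring. Qed.

Lemma resP_step (h0 h1 m lambda : R) (t : nat) :
  resP h0 h1 m (S (S t)) lambda =
  (1 + m - (if Nat.even (S t) then h0 else h1) * lambda) * resP h0 h1 m (S t) lambda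
  - m * resP h0 h1 m t lambda.
Proof.
  unfold resP, hb2. cbn [hb2_pair].
  destruct (hb2_pair h0 h1 m (fun x => lambda * x) 1 t) as [a b]; simpl. ring.
Qed.

Lemma resP_even_rec (h0 h1 m lambda : R) (k : nat) :
  resP h0 h1 m (2 * S (S k)) lambda =
  ((1 + m - h0 * lambda) * (1 + m - h1 * lambda) - 2 * m) * resP h0 h1 m (2 * S k) lambda
  - m ^ 2 * resP h0 h1 m (2 * k) lambda.
Proof.
  assert (Hodd1 : Nat.even (S (2 * k)) = false) by exact (Nat.even_add_mul_2 1 k).
  assert (Heven2 : Nat.even (S (S (2 * k))) = true) by exact (Nat.even_add_mul_2 2 k).
  assert (Hodd3 : Nat.even (S (S (S (2 * k)))) = false) by exact (Nat.even_add_mul_2 3 k).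
  replace (2 * S (S k))%nat with (S (S (S (S (2 * k))))) by lia.
  replace (2 * S k)%nat with (S (S (2 * k))) by lia.
  rewrite (resP_step _ _ _ _ (S (S (2 * k)))), (resP_step _ _ _ _ (S (2 * k))),
    (resP_step _ _ _ _ (2 * k)).
  rewrite Hodd1, Heven2, Hodd3.
  ring.
Qed.

Lemma cheb_step (a0 a1 x : R) (n : nat) :
  fst (cheb_pair a0 a1 x (S (S n))) =
  2 * x * fst (cheb_pair a0 a1 x (S n)) - fst (cheb_pair a0 a1 x n).
Proof.
  cbn [cheb_pair]. destruct (cheb_pair a0 a1 x n) as [p q]; simpl. ring.
Qed.

Lemma cheb_even_rec (a0 a1 x : R) (k : nat) :
  fst (cheb_pair a0 a1 x (2 * S (S k))) =
  (4 * x ^ 2 - 2) * fst (cheb_pair a0 a1 x (2 * S k)) - fst (cheb_pair a0 a1 x (2 * k)).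
Proof.
  replace (2 * S (S k))%nat with (S (S (S (S (2 * k))))) by lia.
  replace (2 * S k)%nat with (S (S (2 * k))) by lia.
  rewrite (cheb_step _ _ _ (S (S (2 * k)))), (cheb_step _ _ _ (S (2 * k))),
    (cheb_step _ _ _ (2 * k)).
  ring.
Qed.

Lemma zeta_scaled (h0 h1 m lambda : R) :
  0 < m ->
  4 * m * zeta h0 h1 m lambda = (1 + m - h0 * lambda) * (1 + m - h1 * lambda).
Proof.
  intro Hm.
  assert (Hsm : sqrt m * sqrt m = m) by (apply sqrt_sqrt; lra).
  assert (Hsm_pos : 0 < sqrt m) by (apply sqrt_lt_R0; lra).
  unfold zeta. replace (4 * m) with (2 * sqrt m * (2 * sqrt m)) by nra.
  field. lra.
Qed.

Theorem mainTheorem14 (m h0 h1 : R) (hm : 0 < m < 1) (n : nat) (lambda : R)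
  (hz : 0 <= zeta h0 h1 m lambda) :
  resP h0 h1 m (2 * n) lambda =
  m ^ n * (2 * m / (1 + m) * chebT (2 * n) (sqrt (zeta h0 h1 m lambda))
           + (1 - m) / (1 + m) * chebU (2 * n) (sqrt (zeta h0 h1 m lambda))).
Proof.
  set (z := sqrt (zeta h0 h1 m lambda)).
  set (A := 1 + m - h0 * lambda).
  set (B := 1 + m - h1 * lambda).
  set (cheb := fun k => 2 * m / (1 + m) * chebT (2 * k) z + (1 - m) / (1 + m) * chebU (2 * k) z).
  assert (Hz2 : 4 * m * z ^ 2 = A * B)
    by (unfold z; rewrite pow2_sqrt by exact hz; apply zeta_scaled; lra).
  assert (Hcheb : forall k, cheb (S (S k)) = (4 * z ^ 2 - 2) * cheb (S k) - cheb k).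
  { intro k. unfold cheb, chebT, chebU. rewrite !cheb_even_rec. ring. }
  apply (linrec_ext (A * B - 2 * m) (m ^ 2) (fun k => resP h0 h1 m (2 * k) lambda)
           (fun k => m ^ k * cheb k)); clear n.
  - intro k. apply resP_even_rec.
  - intro k. rewrite (linrec_scale m _ cheb Hcheb). rewrite <- Hz2. ring.
  - unfold resP, hb2, cheb, chebT, chebU. simpl. field. lra.
  - change (2 * 1)%nat with 2%nat. rewrite resP_step.
    unfold resP, hb2, cheb, chebT, chebU. simpl.
    replace (2 * z * z) with (2 * (z * z)) by ring.
    replace (2 * z * (2 * z)) with (4 * (z * z)) by ring.
    replace (z * z) with (A * B / (4 * m)) by (rewrite <- Hz2; field; lra).
    unfold A, B. field. lra.
Qed.
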